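(* If $\mathcal{R}_{0}<1$, then the disease-free equilibrium $P^{\ast}=\left(\frac{\mu N^{2}}{p+\mu N},0,0,0,\frac{pN}{p+\mu N}\right)$ is globally asymptotically stable in $\Sigma=\{(S,E,I,R,V)\in\mathbb{R}_{+}^{5}:S+E+I+R+V=N\}$, i.e. every solution of the system below with initial datum in $\Sigma$ converges to $P^{\ast}$ as $t\to+\infty$ (and $P^{\ast}$ is stable).
   Context: Consider the SEIR model with vaccination and equal birth/death rate $\mu>0$: $S'=\mu N-\frac{\beta}{N}S(1-\rho)I-\frac{S}{N}p-\mu S$, $E'=\frac{\beta}{N}S(1-\rho)I-\sigma E-\mu E$, $I'=\sigma E-\gamma I-\mu I$, $R'=\gamma I-\mu R$, $V'=\frac{S}{N}p-\mu V$, where $N>0$ is the (constant) total population, $\beta,\sigma,\gamma>0$, $0<\rho<1$, the numbers of people vaccinated per day with the first and second dose are constants $\Delta_{1},\Delta_{2}\ge0$, the immunity fractions after each dose are $\pi_{1},\pi_{2}$, and $p=\Delta_{1}\pi_{1}+\Delta_{2}(\pi_{2}-\pi_{1})\ge0$. The set $\Sigma$ is positively invariant (nonnegative initial data give nonnegative solutions with $S+E+I+R+V=N$). The reproductive number is $\mathcal{R}_{0}=\frac{\mu N\sigma\beta(1-\rho)}{(\sigma+\mu)(\gamma+\mu)(p+\mu N)}$ (denoted $R_0$ in the paper, not to be confused with the initial value of $R$). *)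

From Stdlib Require Import Reals.
From Coquelicot Require Import Coquelicot.
Open Scope R_scope.

Definition vacc_p (Delta1 Delta2 pi1 pi2 : R) : R :=
  Delta1 * pi1 + Delta2 * (pi2 - pi1).

Definition repro_number (mu N beta sigma gamma rho p : R) : R :=
  mu * N * sigma * beta * (1 - rho) /
  ((sigma + mu) * (gamma + mu) * (p + mu * N)).

Definition in_Sigma (N s e i r v : R) : Prop :=
  0 <= s /\ 0 <= e /\ 0 <= i /\ 0 <= r /\ 0 <= v /\ s + e + i + r + v = N.

Definition is_solution (mu N beta sigma gamma rho p : R)
    (S E I Rc V : R -> R) : Prop :=
  (forall t, 0 < t ->
     is_derive S t (mu * N - beta / N * S t * (1 - rho) * I t
                    - S t / N * p - mu * S t) /\
     is_derive E t (beta / N * S t * (1 - rho) * I t - sigma * E t - mu * E t) /\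
     is_derive I t (sigma * E t - gamma * I t - mu * I t) /\
     is_derive Rc t (gamma * I t - mu * Rc t) /\
     is_derive V t (S t / N * p - mu * V t)) /\
  filterlim S (at_right 0) (locally (S 0)) /\
  filterlim E (at_right 0) (locally (E 0)) /\
  filterlim I (at_right 0) (locally (I 0)) /\
  filterlim Rc (at_right 0) (locally (Rc 0)) /\
  filterlim V (at_right 0) (locally (V 0)).

Definition dist5 (a1 a2 a3 a4 a5 b1 b2 b3 b4 b5 : R) : R :=
  sqrt ((a1 - b1)^2 + (a2 - b2)^2 + (a3 - b3)^2 + (a4 - b4)^2 + (a5 - b5)^2).

From Stdlib Require Import Reals Lra Psatz.
From Coquelicot Require Import Coquelicot.
Open Scope R_scope.
Set Bullet Behavior "Strict Subproofs".

(* Along a solution starting in Sigma the compartments stay nonnegative and add up to N, so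
   S' <= mu N - (r + mu) S with r = p / N, and S is eventually below S* + eta, where
   S* = mu N / (r + mu).  Writing a = beta (1 - rho) / N, the hypothesis R0 < 1 reads
   a sigma S* < (sigma + mu) (gamma + mu); this leaves room for eta > 0 and a weight th > 0
   such that L = E + th I satisfies L' <= - dl L with dl > 0 wherever S <= S* + eta.  Hence
   E, I -> 0, then R -> 0 from R' = gamma I - mu R, S -> S* from S' >= mu N - (r + mu + a e) S
   once I <= e, and V = N - S - E - I - R.  The same linear comparisons, started at t = 0,
   bound every deviation from P* by a fixed multiple of the initial one: stability. *)

Lemma continuity_pt_of_is_derive (f : R -> R) x l :
  is_derive f x l -> continuity_pt f x.
Proof.
  intros H. apply continuity_pt_filterlim, (ex_derive_continuous f x).
  now exists l.
Qed.

Lemma le_of_derive_nonpos (f df : R -> R) s t : s <= t ->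
  (forall x, s < x <= t -> is_derive f x (df x)) ->
  (forall x, s < x <= t -> df x <= 0) ->
  continuity_pt f s -> f t <= f s.
Proof.
  intros Hst Hd Hneg Hc.
  assert (Hinner : forall y, s < y <= t -> f t <= f y).
  { intros y Hy.
    destruct (MVT_gen f y t df) as [c [Hcyt Hmvt]].
    - rewrite Rmin_left, Rmax_right by lra. intros x Hx; apply Hd; lra.
    - rewrite Rmin_left, Rmax_right by lra.
      intros x Hx; apply (continuity_pt_of_is_derive f x (df x)), Hd; lra.
    - rewrite Rmin_left, Rmax_right in Hcyt by lra.
      assert (df c <= 0) by (apply Hneg; lra). nra. }
  destruct (Rle_lt_dec (f t) (f s)) as [|Hlt]; [assumption|].
  assert (Hts : s < t) by (destruct Hst as [|<-]; lra).
  apply continuity_pt_filterlim in Hc.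
  destruct (proj1 (filterlim_locally _ _) Hc (mkposreal _ (proj2 (Rlt_0_minus _ _) Hlt)))
    as [d Hd'].
  set (y := s + Rmin d (t - s) / 2).
  assert (Hm : 0 < Rmin d (t - s) <= d /\ Rmin d (t - s) <= t - s)
    by (pose proof (cond_pos d);
        repeat split; [apply Rmin_glb_lt | apply Rmin_l | apply Rmin_r]; lra).
  assert (Hy : ball s d y) by (change (Rabs (y - s) < d); unfold y; rewrite Rabs_right; lra).
  specialize (Hd' y Hy). change (Rabs (f y - f s) < f t - f s) in Hd'.
  apply Rabs_lt_between in Hd'.
  assert (f t <= f y) by (apply Hinner; unfold y; lra). lra.
Qed.

Lemma comparison_le (f df : R -> R) k A s t : s <= t ->
  (forall x, s < x <= t -> is_derive f x (df x)) ->
  (forall x, s < x <= t -> df x <= - k * (f x - A)) ->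
  continuity_pt f s -> f t - A <= (f s - A) * exp (- k * (t - s)).
Proof.
  intros Hst Hd Hle Hc.
  assert (Hmono : exp (k * t) * (f t - A) <= exp (k * s) * (f s - A)).
  { apply (le_of_derive_nonpos (fun x => exp (k * x) * (f x - A))
             (fun x => exp (k * x) * (df x + k * (f x - A)))); [lra| | |].
    - intros x Hx. specialize (Hd x Hx). auto_derive.
      + now exists (df x).
      + rewrite (is_derive_unique (fun y : R => f y) _ _ Hd). ring.
    - intros x Hx. specialize (Hle x Hx). pose proof (exp_pos (k * x)). nra.
    - apply continuity_pt_mult.
      + apply (continuity_pt_of_is_derive _ _ (k * exp (k * s))).
        auto_derive; [easy | ring].
      + apply continuity_pt_minus; [exact Hc | now apply continuity_pt_const].
  }
  replace (- k * (t - s)) with (k * s + - (k * t)) by ring.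
  rewrite exp_plus.
  pose proof (exp_pos (- (k * t))).
  assert (Hinv : exp (k * t) * exp (- (k * t)) = 1)
    by (rewrite <- exp_plus, Rplus_opp_r; apply exp_0).
  apply (Rmult_le_compat_l (exp (- (k * t)))) in Hmono; [|lra].
  replace (f t - A) with (exp (- (k * t)) * (exp (k * t) * (f t - A)))
    by (rewrite <- Rmult_assoc, (Rmult_comm (exp _)), Hinv; ring).
  lra.
Qed.

Lemma comparison_ge (f df : R -> R) k A s t : s <= t ->
  (forall x, s < x <= t -> is_derive f x (df x)) ->
  (forall x, s < x <= t -> - k * (f x - A) <= df x) ->
  continuity_pt f s -> (f s - A) * exp (- k * (t - s)) <= f t - A.
Proof.
  intros Hst Hd Hge Hc.
  enough (- f t - - A <= (- f s - - A) * exp (- k * (t - s))) by lra.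
  apply (comparison_le (fun x => - f x) (fun x => - df x)); [exact Hst | | |].
  - intros x Hx. now apply (is_derive_opp f x (df x)), Hd.
  - intros x Hx. specialize (Hge x Hx). lra.
  - now apply continuity_pt_opp.
Qed.

Definition neg_sq (y : R) : R := Rmin y 0 ^ 2.

Lemma is_derive_neg_sq x : is_derive neg_sq x (2 * Rmin x 0).
Proof.
  apply is_derive_Reals. intros eps Heps.
  exists (mkposreal eps Heps). intros h Hh0 Hh. simpl in Hh.
  assert (Hquad : Rabs (neg_sq (x + h) - neg_sq x - 2 * Rmin x 0 * h) <= h ^ 2).
  { unfold neg_sq, Rmin. apply Rabs_le.
    destruct (Rle_dec (x + h) 0), (Rle_dec x 0); split; nra. }
  assert (Hh2 : h ^ 2 = Rabs h * Rabs h) by (rewrite <- Rabs_mult, Rabs_right; nra).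
  assert (0 < Rabs h) by (apply Rabs_pos_lt; auto).
  replace ((neg_sq (x + h) - neg_sq x) / h - 2 * Rmin x 0)
    with ((neg_sq (x + h) - neg_sq x - 2 * Rmin x 0 * h) / h) by (field; auto).
  unfold Rdiv. rewrite Rabs_mult, Rabs_inv.
  apply (Rmult_lt_reg_r (Rabs h)); [lra|].
  rewrite Rmult_assoc, Rinv_l by lra. nra.
Qed.

(* [exp (- 2 C x) * (neg_sq (f x) + neg_sq (g x))] is nonincreasing and vanishes at [s]. *)
Lemma nonneg2_of_neg_part_estimate (f g df dg : R -> R) C s t :
  0 <= C -> s <= t ->
  (forall x, s < x <= t -> is_derive f x (df x) /\ is_derive g x (dg x)) ->
  (forall x, s < x <= t ->
     Rmin (f x) 0 * df x + Rmin (g x) 0 * dg x <= C * (neg_sq (f x) + neg_sq (g x))) ->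
  continuity_pt f s -> continuity_pt g s -> 0 <= f s -> 0 <= g s ->
  0 <= f t /\ 0 <= g t.
Proof.
  intros HC Hst Hd Hest Hcf Hcg Hf0 Hg0.
  set (psi := fun x => exp (- (2 * C) * x) * (neg_sq (f x) + neg_sq (g x))).
  assert (Hpsi : psi t <= psi s).
  { apply (le_of_derive_nonpos psi (fun x => exp (- (2 * C) * x) *
       (2 * Rmin (f x) 0 * df x + 2 * Rmin (g x) 0 * dg x
        - 2 * C * (neg_sq (f x) + neg_sq (g x))))); [lra| | |].
    - intros x Hx. destruct (Hd x Hx) as [Df Dg].
      unfold psi. auto_derive.
      + repeat split; eexists; eauto using is_derive_neg_sq.
      + rewrite (is_derive_unique (fun y : R => f y) _ _ Df),
          (is_derive_unique (fun y : R => g y) _ _ Dg),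
          !(is_derive_unique (fun y : R => neg_sq y) _ _ (is_derive_neg_sq _)).
        ring.
    - intros x Hx. pose proof (Hest x Hx). pose proof (exp_pos (- (2 * C) * x)). nra.
    - unfold psi. apply continuity_pt_mult.
      + apply (continuity_pt_of_is_derive _ _ (- (2 * C) * exp (- (2 * C) * s))).
        auto_derive; [easy | ring].
      + apply continuity_pt_plus; apply (continuity_pt_comp _ neg_sq); auto;
          apply (continuity_pt_of_is_derive _ _ _ (is_derive_neg_sq _)). }
  unfold psi, neg_sq in Hpsi.
  rewrite (Rmin_right (f s)), (Rmin_right (g s)) in Hpsi by lra.
  pose proof (exp_pos (- (2 * C) * t)).
  assert (Hz : Rmin (f t) 0 ^ 2 + Rmin (g t) 0 ^ 2 <= 0) by nra.
  assert (Rmin (f t) 0 = 0 /\ Rmin (g t) 0 = 0) as [Hf Hg] by (split; nra).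
  unfold Rmin in Hf, Hg.
  destruct (Rle_dec (f t) 0), (Rle_dec (g t) 0); lra.
Qed.

Lemma nonneg_of_neg_part_estimate (f df : R -> R) C s t :
  0 <= C -> s <= t ->
  (forall x, s < x <= t -> is_derive f x (df x)) ->
  (forall x, s < x <= t -> f x < 0 -> f x * df x <= C * f x ^ 2) ->
  continuity_pt f s -> 0 <= f s -> 0 <= f t.
Proof.
  intros HC Hst Hd Hest Hc Hf0.
  refine (proj1 (nonneg2_of_neg_part_estimate f (fun _ => 0) df (fun _ => 0) C s t HC Hst _ _
                   Hc (continuity_pt_const (fun _ => 0) s (fun _ _ => eq_refl))
                   Hf0 (Rle_refl 0))).
  - intros x Hx. split; [now apply Hd | apply (is_derive_const 0)].
  - intros x Hx. unfold neg_sq, Rmin.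
    destruct (Rle_dec (f x) 0) as [Hfx|Hfx], (Rle_dec 0 0); try lra.
    destruct (Req_dec (f x) 0) as [->|Hne]; [lra|].
    specialize (Hest x Hx ltac:(lra)). lra.
Qed.

Lemma Rmin0_mul_self x : Rmin x 0 * x = Rmin x 0 ^ 2.
Proof. unfold Rmin. destruct (Rle_dec x 0); lra. Qed.

Lemma Rmin0_mul_le x y : Rmin x 0 * y <= Rmin x 0 * Rmin y 0.
Proof. unfold Rmin. destruct (Rle_dec x 0), (Rle_dec y 0); nra. Qed.

Lemma exp_neg_le1 X : 0 <= X -> exp (- X) <= 1.
Proof.
  intros HX.
  pose proof (exp_ineq1_le X). pose proof (exp_pos (- X)).
  assert (exp (- X) * exp X = 1) by (rewrite <- exp_plus, Rplus_opp_l; apply exp_0).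
  nra.
Qed.

Lemma mul_exp_neg_lt D d k X : D < d -> 0 < d -> 0 <= k -> 0 <= X -> D * exp (- k * X) < d.
Proof.
  intros HD Hd Hk HX.
  replace (- k * X) with (- (k * X)) by ring.
  pose proof (exp_neg_le1 (k * X) ltac:(nra)). pose proof (exp_pos (- (k * X))).
  destruct (Rle_lt_dec D 0); nra.
Qed.

Lemma eventually_mul_exp_lt D k s e : 0 < k -> 0 < e ->
  Rbar_locally p_infty (fun t => D * exp (- k * (t - s)) < e).
Proof.
  intros Hk He.
  exists (s + Rabs D / (k * e)). intros t Ht.
  set (X := k * (t - s)).
  assert (HX : Rabs D < e * X).
  { unfold X. apply (Rmult_lt_compat_l (k * e)) in Ht; [|nra].
    replace (k * e * (s + Rabs D / (k * e))) with (k * e * s + Rabs D) in Ht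
      by (field; lra).
    nra. }
  pose proof (exp_ineq1_le X). pose proof (exp_pos (- X)). pose proof (Rle_abs D).
  assert (exp (- X) * exp X = 1) by (rewrite <- exp_plus, Rplus_opp_l; apply exp_0).
  replace (- k * (t - s)) with (- X) by (unfold X; ring).
  assert (X * exp (- X) < 1) by nra.
  assert (D * exp (- X) <= Rabs D * exp (- X)) by nra.
  nra.
Qed.

Lemma eventually_lt_of_derive_le (f df : R -> R) k A e : 0 < k -> 0 < e ->
  (forall x, 0 < x -> is_derive f x (df x)) -> (forall x, continuity_pt f x) ->
  Rbar_locally p_infty (fun x => df x <= - k * (f x - A)) ->
  Rbar_locally p_infty (fun t => f t < A + e).
Proof.
  intros Hk He Hd Hc [M HM].
  set (s := Rmax M 0 + 1).
  assert (Hs : M < s /\ 0 < s)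
    by (pose proof (Rmax_l M 0); pose proof (Rmax_r M 0); unfold s; lra).
  assert (Hafter : Rbar_locally p_infty (fun t => s < t)) by (now exists s).
  generalize (filter_and _ _ Hafter (eventually_mul_exp_lt (f s - A) k s e Hk He)).
  apply filter_imp. intros t [Hst Hexp].
  enough (f t - A <= (f s - A) * exp (- k * (t - s))) by lra.
  apply (comparison_le f df); [lra | | | apply Hc].
  - intros x Hx. apply Hd. lra.
  - intros x Hx. apply HM. lra.
Qed.

Lemma eventually_gt_of_derive_ge (f df : R -> R) k A e : 0 < k -> 0 < e ->
  (forall x, 0 < x -> is_derive f x (df x)) -> (forall x, continuity_pt f x) ->
  Rbar_locally p_infty (fun x => - k * (f x - A) <= df x) ->
  Rbar_locally p_infty (fun t => A - e < f t).
Proof.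
  intros Hk He Hd Hc Hge.
  generalize (eventually_lt_of_derive_le (fun x => - f x) (fun x => - df x) k (- A) e Hk He).
  intros H. apply (filter_imp (fun t => - f t < - A + e)); [intros; lra|].
  apply H.
  - intros x Hx. now apply (is_derive_opp f x (df x)), Hd.
  - intros x. now apply continuity_pt_opp.
  - revert Hge. apply filter_imp. intros x Hx. lra.
Qed.

Lemma eventually_nonneg_and (P : R -> Prop) :
  Rbar_locally p_infty P -> Rbar_locally p_infty (fun t => 0 <= t /\ P t).
Proof.
  intros [M HM]. exists (Rmax M 0). intros t Ht.
  pose proof (Rmax_l M 0); pose proof (Rmax_r M 0).
  split; [lra | apply HM; lra].
Qed.

Lemma is_lim_of_eventually_near (f : R -> R) l :
  (forall e, 0 < e -> Rbar_locally p_infty (fun t => l - e < f t < l + e)) ->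
  is_lim f p_infty l.
Proof.
  intros H. apply is_lim_spec. intros eps.
  apply (filter_imp _ _ (fun t Ht => proj2 (Rabs_lt_between' (f t) l eps) Ht)).
  apply H, cond_pos.
Qed.

Lemma is_lim_zero_of_nonneg (f : R -> R) : (forall t, 0 <= t -> 0 <= f t) ->
  (forall e, 0 < e -> Rbar_locally p_infty (fun t => f t < e)) -> is_lim f p_infty 0.
Proof.
  intros Hf Hlt. apply is_lim_of_eventually_near. intros e He.
  generalize (eventually_nonneg_and _ (Hlt e He)).
  apply filter_imp. intros t [Ht Hft]. specialize (Hf t Ht). lra.
Qed.

Lemma bounded_on_segment (f : R -> R) a b : a <= b -> (forall x, continuity_pt f x) ->
  exists M, 0 <= M /\ forall x, a <= x <= b -> Rabs (f x) <= M.
Proof.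
  intros Hab Hc.
  destruct (continuity_ab_maj (fun x => Rabs (f x)) a b Hab) as [xM [HM _]].
  - intros x _. apply (continuity_pt_comp f Rabs); [apply Hc | apply Rcontinuity_abs].
  - exists (Rabs (f xM)). split; [apply Rabs_pos | exact HM].
Qed.

(* Solutions are only right-continuous at [0]; freezing them on [t < 0] makes them
   continuous everywhere. *)
Definition ext0 (X : R -> R) (t : R) : R := X (Rmax t 0).

Lemma ext0_eq X t : 0 <= t -> ext0 X t = X t.
Proof. intros Ht. unfold ext0. now rewrite Rmax_left. Qed.

Lemma ext0_locally_eq X t : 0 < t -> locally t (fun y => ext0 X y = X y).
Proof.
  intros Ht. exists (mkposreal t Ht). intros y Hy.
  apply Rabs_lt_between' in Hy. simpl in Hy. apply ext0_eq. lra.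
Qed.

Lemma is_derive_ext0 X t l : 0 < t -> is_derive X t l -> is_derive (ext0 X) t l.
Proof.
  intros Ht HX. apply (is_derive_ext_loc X); [|exact HX].
  apply (filter_imp _ _ (fun y Hy => eq_sym Hy)), ext0_locally_eq, Ht.
Qed.

Lemma continuity_ext0 X :
  (forall t, 0 < t -> continuity_pt X t) -> filterlim X (at_right 0) (locally (X 0)) ->
  forall x, continuity_pt (ext0 X) x.
Proof.
  intros Hc Hr x. apply continuity_pt_filterlim.
  destruct (Rlt_or_le 0 x) as [Hx|Hx].
  - rewrite ext0_eq by lra.
    apply (filterlim_ext_loc X).
    + apply (filter_imp _ _ (fun y Hy => eq_sym Hy)), ext0_locally_eq, Hx.
    + now apply continuity_pt_filterlim, Hc.
  - unfold ext0 at 2. rewrite Rmax_right by lra.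
    apply filterlim_locally. intros eps.
    destruct (Rle_lt_dec 0 x) as [Hx0|Hx0].
    + assert (x = 0) as -> by lra.
      destruct (proj1 (filterlim_locally X (X 0)) Hr eps) as [d Hd].
      exists d. intros y Hy.
      destruct (Rle_lt_dec y 0) as [Hy0|Hy0].
      * unfold ext0. rewrite Rmax_right by lra. apply ball_center.
      * rewrite ext0_eq by lra. now apply Hd.
    + exists (mkposreal (- x) ltac:(lra)). intros y Hy.
      apply Rabs_lt_between' in Hy. simpl in Hy.
      unfold ext0. rewrite Rmax_right by lra. apply ball_center.
Qed.

Lemma is_lim_of_ext0 X l : is_lim (ext0 X) p_infty l -> is_lim X p_infty l.
Proof.
  apply is_lim_ext_loc. exists 0. intros t Ht. apply ext0_eq. lra.
Qed.

Lemma Rabs_le_dist5 a1 a2 a3 a4 a5 b1 b2 b3 b4 b5 :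
  let d := dist5 a1 a2 a3 a4 a5 b1 b2 b3 b4 b5 in
  Rabs (a1 - b1) <= d /\ Rabs (a2 - b2) <= d /\ Rabs (a3 - b3) <= d /\
  Rabs (a4 - b4) <= d /\ Rabs (a5 - b5) <= d.
Proof.
  unfold dist5.
  assert (Hcomp : forall x, x ^ 2 <=
      (a1 - b1) ^ 2 + (a2 - b2) ^ 2 + (a3 - b3) ^ 2 + (a4 - b4) ^ 2 + (a5 - b5) ^ 2 ->
      Rabs x <=
      sqrt ((a1 - b1) ^ 2 + (a2 - b2) ^ 2 + (a3 - b3) ^ 2 + (a4 - b4) ^ 2 + (a5 - b5) ^ 2)).
  { intros x Hx. rewrite <- (sqrt_pow2 (Rabs x)), pow2_abs by apply Rabs_pos.
    now apply sqrt_le_1_alt. }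
  pose proof (pow2_ge_0 (a1 - b1)); pose proof (pow2_ge_0 (a2 - b2));
  pose proof (pow2_ge_0 (a3 - b3)); pose proof (pow2_ge_0 (a4 - b4));
  pose proof (pow2_ge_0 (a5 - b5)).
  repeat split; apply Hcomp; lra.
Qed.

Lemma dist5_le_sum a1 a2 a3 a4 a5 b1 b2 b3 b4 b5 :
  dist5 a1 a2 a3 a4 a5 b1 b2 b3 b4 b5 <=
  Rabs (a1 - b1) + Rabs (a2 - b2) + Rabs (a3 - b3) + Rabs (a4 - b4) + Rabs (a5 - b5).
Proof.
  unfold dist5.
  pose proof (Rabs_pos (a1 - b1)); pose proof (Rabs_pos (a2 - b2));
  pose proof (Rabs_pos (a3 - b3)); pose proof (Rabs_pos (a4 - b4));
  pose proof (Rabs_pos (a5 - b5)).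
  match goal with |- _ <= ?s => rewrite <- (sqrt_pow2 s) by lra end.
  apply sqrt_le_1_alt. rewrite <- !(pow2_abs (_ - _)). nra.
Qed.

(* Both slacks are positive for [th] strictly between [a (Ss + eta) / k2] and [k1 / sg], an
   interval that is nonempty once [eta] is small; [th] is its midpoint. *)
Lemma lyapunov_weights_exist a sg k1 k2 Ss :
  0 < a -> 0 < sg -> 0 < k2 -> 0 <= Ss -> a * sg * Ss < k1 * k2 ->
  exists eta th dl, 0 < eta /\ 0 < th /\ 0 < dl /\ dl <= k1 - th * sg /\
    dl * th <= th * k2 - a * (Ss + eta).
Proof.
  intros Ha Hsg Hk2 HSs H.
  set (eta := (k1 * k2 - a * sg * Ss) / (2 * (a * sg))).
  assert (Heta : 0 < eta) by (unfold eta; apply Rdiv_lt_0_compat; nra).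
  set (S1 := Ss + eta).
  assert (HS1 : a * sg * S1 = (k1 * k2 + a * sg * Ss) / 2) by (unfold S1, eta; field; lra).
  set (th := (a * S1 / k2 + k1 / sg) / 2).
  set (gap := k1 * k2 - a * sg * S1).
  assert (Hgap : 0 < gap) by (unfold gap; lra).
  assert (Hd1 : k1 - th * sg = gap / (2 * k2)) by (unfold th, gap; field; lra).
  assert (Hd2 : th * k2 - a * S1 = gap / (2 * sg)) by (unfold th, gap; field; lra).
  assert (HS1pos : 0 <= a * S1) by (apply Rmult_le_pos; unfold S1; lra).
  assert (ES1 : S1 = Ss + eta) by reflexivity.
  clearbody eta S1 th gap.
  assert (Hth : 0 < th).
  { assert (0 < gap / (2 * sg)) by (apply Rdiv_lt_0_compat; lra).
    apply (Rmult_lt_reg_r k2); lra. }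
  set (dl := Rmin (gap / (2 * k2)) (gap / (2 * sg) / th)).
  exists eta, th, dl. repeat split; auto.
  - apply Rmin_glb_lt; repeat apply Rdiv_lt_0_compat; lra.
  - rewrite Hd1. apply Rmin_l.
  - rewrite <- ES1, Hd2.
    apply Rle_trans with (gap / (2 * sg) / th * th).
    + apply Rmult_le_compat_r; [lra | apply Rmin_r].
    + right. field. lra.
Qed.

Lemma div_add_gap q A a ep : 0 < q -> 0 <= A -> 0 < a -> 0 <= ep ->
  A / (q + a * ep) <= A / q /\ A / q - A / (q + a * ep) <= A * a * ep / q ^ 2.
Proof.
  intros Hq HA Ha Hep.
  assert (0 <= a * ep) by nra.
  split.
  - apply Rmult_le_compat_l; [lra|]. apply Rinv_le_contravar; lra.
  - replace (A / q - A / (q + a * ep)) with (A * a * ep / (q * (q + a * ep)))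
      by (field; lra).
    apply Rmult_le_compat_l; [nra|].
    apply Rinv_le_contravar; [apply pow_lt; lra|]. simpl. nra.
Qed.

Lemma repro_number_lt1 mu N beta sigma gamma rho p :
  0 < mu -> 0 < N -> 0 < sigma -> 0 < gamma -> 0 <= p ->
  repro_number mu N beta sigma gamma rho p < 1 ->
  beta / N * (1 - rho) * sigma * (mu * N / (p / N + mu)) < (sigma + mu) * (gamma + mu).
Proof.
  intros Hmu HN Hsg Hgm Hp HR0.
  replace (beta / N * (1 - rho) * sigma * (mu * N / (p / N + mu)))
    with (repro_number mu N beta sigma gamma rho p * ((sigma + mu) * (gamma + mu)))
    by (unfold repro_number; field; nra).
  assert (0 < (sigma + mu) * (gamma + mu)) by nra.
  nra.
Qed.

Definition seir_solution (mu N a r sg gm : R) (S E I Rc V : R -> R) : Prop :=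
  (forall t, 0 < t ->
     is_derive S t (mu * N - a * S t * I t - (r + mu) * S t) /\
     is_derive E t (a * S t * I t - (sg + mu) * E t) /\
     is_derive I t (sg * E t - (gm + mu) * I t) /\
     is_derive Rc t (gm * I t - mu * Rc t) /\
     is_derive V t (r * S t - mu * V t)) /\
  (forall x, continuity_pt S x /\ continuity_pt E x /\ continuity_pt I x /\
             continuity_pt Rc x /\ continuity_pt V x).

Lemma seir_solution_ext0 mu N beta sigma gamma rho p S E I Rc V : 0 < N ->
  is_solution mu N beta sigma gamma rho p S E I Rc V ->
  seir_solution mu N (beta / N * (1 - rho)) (p / N) sigma gamma
    (ext0 S) (ext0 E) (ext0 I) (ext0 Rc) (ext0 V).
Proof.
  intros HN [Hd [HcS [HcE [HcI [HcR HcV]]]]].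
  assert (is_derive_rhs : forall (f : R -> R) (t l l' : R), is_derive f t l -> l = l' ->
                            is_derive f t l') by (now intros f t l l' Hf <-).
  split.
  - intros t Ht. rewrite !ext0_eq by lra.
    destruct (Hd t Ht) as [DS [DE [DI [DR DV]]]].
    apply is_derive_ext0 in DS, DE, DI, DR, DV; try exact Ht.
    split; [|split; [|split; [|split]]]; (eapply is_derive_rhs; [eassumption|]).
    all: field; lra.
  - intros x.
    assert (Hc : forall X, (forall t, 0 < t -> ex_derive X t) ->
                 filterlim X (at_right 0) (locally (X 0)) -> continuity_pt (ext0 X) x).
    { intros X HdX Hr. apply continuity_ext0; [|exact Hr].
      intros t Ht. destruct (HdX t Ht) as [l Hl]. exact (continuity_pt_of_is_derive _ _ _ Hl). }
    split; [|split; [|split; [|split]]]; apply Hc; try assumption;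
      intros t Ht; destruct (Hd t Ht) as [DS [DE [DI [DR DV]]]]; eexists; eassumption.
Qed.

Section SEIR.

Variables mu N a r sg gm : R.
Hypotheses (Hmu : 0 < mu) (HN : 0 < N) (Ha : 0 < a) (Hr : 0 <= r)
  (Hsg : 0 < sg) (Hgm : 0 < gm).

Local Notation Sst := (mu * N / (r + mu)).

Variables eta th dl : R.
Hypotheses (Heta : 0 < eta) (Hth : 0 < th) (Hdl : 0 < dl)
  (Hdl_E : dl <= sg + mu - th * sg) (Hdl_I : dl * th <= th * (gm + mu) - a * (Sst + eta)).

Local Notation gain := (3 + th + (1 + th) / th * (1 + gm / mu + mu * N * a / (r + mu) ^ 2)).

Section Solution.

Variables S E I Rc V : R -> R.
Hypothesis Hsol : seir_solution mu N a r sg gm S E I Rc V.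
Hypothesis H0 : in_Sigma N (S 0) (E 0) (I 0) (Rc 0) (V 0).

Let dS t (Ht : 0 < t) : is_derive S t (mu * N - a * S t * I t - (r + mu) * S t) :=
  proj1 (proj1 Hsol t Ht).
Let dE t (Ht : 0 < t) : is_derive E t (a * S t * I t - (sg + mu) * E t) :=
  proj1 (proj2 (proj1 Hsol t Ht)).
Let dI t (Ht : 0 < t) : is_derive I t (sg * E t - (gm + mu) * I t) :=
  proj1 (proj2 (proj2 (proj1 Hsol t Ht))).
Let dR t (Ht : 0 < t) : is_derive Rc t (gm * I t - mu * Rc t) :=
  proj1 (proj2 (proj2 (proj2 (proj1 Hsol t Ht)))).
Let dV t (Ht : 0 < t) : is_derive V t (r * S t - mu * V t) :=
  proj2 (proj2 (proj2 (proj2 (proj1 Hsol t Ht)))).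
Let cS x : continuity_pt S x := proj1 (proj2 Hsol x).
Let cE x : continuity_pt E x := proj1 (proj2 (proj2 Hsol x)).
Let cI x : continuity_pt I x := proj1 (proj2 (proj2 (proj2 Hsol x))).
Let cR x : continuity_pt Rc x := proj1 (proj2 (proj2 (proj2 (proj2 Hsol x)))).
Let cV x : continuity_pt V x := proj2 (proj2 (proj2 (proj2 (proj2 Hsol x)))).

Lemma total_population t : 0 <= t -> S t + E t + I t + Rc t + V t = N.
Proof.
  intros Ht.
  set (T := fun x => S x + E x + I x + Rc x + V x).
  assert (HdT : forall x, 0 < x <= t -> is_derive T x (- mu * (T x - N))).
  { intros x [Hx _].
    replace (- mu * (T x - N)) with
      (mu * N - a * S x * I x - (r + mu) * S x + (a * S x * I x - (sg + mu) * E x)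
       + (sg * E x - (gm + mu) * I x) + (gm * I x - mu * Rc x) + (r * S x - mu * V x))
      by (unfold T; ring).
    exact (is_derive_plus _ _ _ _ _ (is_derive_plus _ _ _ _ _ (is_derive_plus _ _ _ _ _
             (is_derive_plus _ _ _ _ _ (dS x Hx) (dE x Hx)) (dI x Hx)) (dR x Hx)) (dV x Hx)). }
  assert (HcT : continuity_pt T 0) by (repeat apply continuity_pt_plus; auto).
  pose proof (comparison_le T _ mu N 0 t Ht HdT (fun x _ => Rle_refl _) HcT).
  pose proof (comparison_ge T _ mu N 0 t Ht HdT (fun x _ => Rle_refl _) HcT).
  destruct H0 as [_ [_ [_ [_ [_ HT0]]]]].
  change (S 0 + E 0 + I 0 + Rc 0 + V 0) with (T 0) in HT0.
  rewrite HT0, Rminus_diag, Rmult_0_l in *.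
  change (T t = N). lra.
Qed.

Lemma S_nonneg t : 0 <= t -> 0 <= S t.
Proof.
  intros Ht.
  destruct (bounded_on_segment I 0 t Ht cI) as [M [HM0 HM]].
  apply (nonneg_of_neg_part_estimate S (fun x => mu * N - a * S x * I x - (r + mu) * S x)
           (a * M) 0 t); [nra | exact Ht | | | apply cS | apply H0].
  - intros x Hx. apply dS. lra.
  - intros x Hx HSx. specialize (HM x ltac:(lra)). apply Rabs_le_between in HM.
    assert (0 <= a * S x ^ 2 * (M + I x)) by (apply Rmult_le_pos; nra).
    assert (0 < mu * N) by nra.
    assert (0 <= (r + mu) * S x ^ 2) by nra.
    nra.
Qed.

Lemma EI_nonneg t : 0 <= t -> 0 <= E t /\ 0 <= I t.
Proof.
  intros Ht.
  destruct (bounded_on_segment S 0 t Ht cS) as [M [HM0 HM]].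
  apply (nonneg2_of_neg_part_estimate E I (fun x => a * S x * I x - (sg + mu) * E x)
           (fun x => sg * E x - (gm + mu) * I x) (a * M + sg) 0 t); try apply H0; auto; [nra | |].
  - intros x Hx. split; [apply dE | apply dI]; lra.
  - (* With [e], [i] the negative parts of [E x], [I x]: [e E x = e ^ 2], [e I x <= e i] and
       [i E x <= e i], so the left-hand side is at most [(a M + sg) e i]. *)
    intros x Hx. unfold neg_sq.
    assert (HSx : 0 <= S x <= M)
      by (specialize (HM x ltac:(lra)); apply Rabs_le_between in HM;
          split; [apply S_nonneg | ]; lra).
    pose proof (Rmin0_mul_self (E x)); pose proof (Rmin0_mul_self (I x)).
    pose proof (Rmin0_mul_le (E x) (I x)); pose proof (Rmin0_mul_le (I x) (E x)).
    pose proof (Rmin_r (E x) 0); pose proof (Rmin_r (I x) 0).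
    set (e := Rmin (E x) 0) in *; set (i := Rmin (I x) 0) in *.
    assert (0 <= e * i) by nra.
    assert (e * (a * S x * I x) <= a * M * (e * i)).
    { apply Rle_trans with (a * S x * (e * i)); [|apply Rmult_le_compat_r; nra].
      replace (e * (a * S x * I x)) with (a * S x * (e * I x)) by ring.
      apply Rmult_le_compat_l; nra. }
    assert (sg * (i * E x) <= sg * (e * i)) by (apply Rmult_le_compat_l; lra).
    assert ((a * M + sg) * (e * i) <= (a * M + sg) * (e ^ 2 + i ^ 2))
      by (apply Rmult_le_compat_l; nra).
    nra.
Qed.

Lemma Rc_nonneg t : 0 <= t -> 0 <= Rc t.
Proof.
  intros Ht.
  apply (nonneg_of_neg_part_estimate Rc (fun x => gm * I x - mu * Rc x) 0 0 t);
    [lra | exact Ht | | | apply cR | apply H0].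
  - intros x Hx. apply dR. lra.
  - intros x Hx HRx. pose proof (proj2 (EI_nonneg x ltac:(lra))).
    assert (0 <= gm * I x) by nra. nra.
Qed.

Lemma V_nonneg t : 0 <= t -> 0 <= V t.
Proof.
  intros Ht.
  apply (nonneg_of_neg_part_estimate V (fun x => r * S x - mu * V x) 0 0 t);
    [lra | exact Ht | | | apply cV | apply H0].
  - intros x Hx. apply dV. lra.
  - intros x Hx HVx. pose proof (S_nonneg x ltac:(lra)).
    assert (0 <= r * S x) by nra. nra.
Qed.

Lemma in_Sigma_forward t : 0 <= t -> in_Sigma N (S t) (E t) (I t) (Rc t) (V t).
Proof.
  intros Ht. pose proof (EI_nonneg t Ht).
  repeat split; try apply S_nonneg; try apply Rc_nonneg; try apply V_nonneg;
    try apply total_population; tauto.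
Qed.

Lemma dist5_le_deviation t : 0 <= t ->
  dist5 (S t) (E t) (I t) (Rc t) (V t) Sst 0 0 0 (N - Sst) <=
  2 * (Rabs (S t - Sst) + E t + I t + Rc t).
Proof.
  intros Ht. destruct (in_Sigma_forward t Ht) as (HS & HE & HI & HR & HV & Hsum).
  eapply Rle_trans; [apply dist5_le_sum|].
  rewrite !Rminus_0_r, (Rabs_right (E t)), (Rabs_right (I t)), (Rabs_right (Rc t)) by lra.
  replace (V t - (N - Sst)) with (- ((S t - Sst) + E t + I t + Rc t)) by lra.
  rewrite Rabs_Ropp.
  pose proof (Rabs_4 (S t - Sst) (E t) (I t) (Rc t)).
  rewrite (Rabs_right (E t)), (Rabs_right (I t)), (Rabs_right (Rc t)) in * by lra.
  lra.
Qed.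

Lemma S_rate_le x : 0 <= x ->
  mu * N - a * S x * I x - (r + mu) * S x <= - (r + mu) * (S x - Sst).
Proof.
  intros Hx. destruct (in_Sigma_forward x Hx) as [HS [_ [HI _]]].
  assert (0 <= a * S x * I x) by (apply Rmult_le_pos; nra).
  replace (- (r + mu) * (S x - Sst)) with (mu * N - (r + mu) * S x) by (field; lra).
  lra.
Qed.

Lemma S_eventually_lt e : 0 < e -> Rbar_locally p_infty (fun t => S t < Sst + e).
Proof.
  intros He.
  apply (eventually_lt_of_derive_le S _ (r + mu) Sst e ltac:(lra) He dS cS).
  exists 0. intros x Hx. apply S_rate_le. lra.
Qed.

Lemma S_rate_ge ep x : 0 <= x -> 0 <= ep -> I x <= ep ->
  - (r + mu + a * ep) * (S x - mu * N / (r + mu + a * ep))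
    <= mu * N - a * S x * I x - (r + mu) * S x.
Proof.
  intros Hx Hep HIx. destruct (in_Sigma_forward x Hx) as [HS _].
  assert (a * S x * I x <= a * S x * ep) by (apply Rmult_le_compat_l; nra).
  replace (- (r + mu + a * ep) * (S x - mu * N / (r + mu + a * ep)))
    with (mu * N - (r + mu + a * ep) * S x) by (field; nra).
  lra.
Qed.

Lemma Rc_rate_le ep x : I x <= ep -> gm * I x - mu * Rc x <= - mu * (Rc x - gm * ep / mu).
Proof.
  intros HIx.
  replace (- mu * (Rc x - gm * ep / mu)) with (gm * ep - mu * Rc x) by (field; lra).
  nra.
Qed.

Let L y := E y + th * I y.

Lemma is_derive_L x : 0 < x ->
  is_derive L x (a * S x * I x - (sg + mu) * E x + th * (sg * E x - (gm + mu) * I x)).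
Proof.
  intros Hx. exact (is_derive_plus _ _ _ _ _ (dE x Hx) (is_derive_scal _ _ th _ (dI x Hx))).
Qed.

Lemma continuity_L x : continuity_pt L x.
Proof. apply continuity_pt_plus; [apply cE | apply continuity_pt_scal, cI]. Qed.

(* Where [S <= Sst + eta], the coefficients of [E] and [I] in [L' + dl L] are nonpositive
   by the choice of the weights. *)
Lemma L_rate_le x : 0 <= x -> S x <= Sst + eta ->
  a * S x * I x - (sg + mu) * E x + th * (sg * E x - (gm + mu) * I x) <= - dl * L x.
Proof.
  intros Hx HSx. destruct (in_Sigma_forward x Hx) as [HS [HE [HI _]]]. unfold L.
  assert (E x * (th * sg - (sg + mu) + dl) <= 0) by nra.
  assert (a * S x <= a * (Sst + eta)) by (apply Rmult_le_compat_l; lra).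
  assert (I x * (a * S x - th * (gm + mu) + dl * th) <= 0) by nra.
  nra.
Qed.

Lemma L_eventually_lt e : 0 < e -> Rbar_locally p_infty (fun t => L t < e).
Proof.
  intros He. replace e with (0 + e) by ring.
  apply (eventually_lt_of_derive_le L _ dl 0 e Hdl He is_derive_L continuity_L).
  generalize (eventually_nonneg_and _ (S_eventually_lt eta Heta)).
  apply filter_imp. intros x [Hx HSx].
  rewrite Rminus_0_r. apply L_rate_le; lra.
Qed.

Lemma E_eventually_lt e : 0 < e -> Rbar_locally p_infty (fun t => E t < e).
Proof.
  intros He. generalize (eventually_nonneg_and _ (L_eventually_lt e He)).
  apply filter_imp. intros t [Ht HL].
  destruct (in_Sigma_forward t Ht) as [_ [_ [HI _]]]. unfold L in HL. nra.
Qed.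

Lemma I_eventually_lt e : 0 < e -> Rbar_locally p_infty (fun t => I t < e).
Proof.
  intros He. generalize (eventually_nonneg_and _ (L_eventually_lt (th * e) ltac:(nra))).
  apply filter_imp. intros t [Ht HL].
  destruct (in_Sigma_forward t Ht) as [_ [HE _]]. unfold L in HL.
  apply (Rmult_lt_reg_l th); lra.
Qed.

Lemma Rc_eventually_lt e : 0 < e -> Rbar_locally p_infty (fun t => Rc t < e).
Proof.
  intros He. set (ep := mu * e / (2 * gm)).
  replace e with (gm * ep / mu + e / 2) by (unfold ep; field; lra).
  apply (eventually_lt_of_derive_le Rc _ mu _ (e / 2) Hmu ltac:(lra) dR cR).
  destruct (I_eventually_lt ep ltac:(unfold ep; apply Rdiv_lt_0_compat; nra)) as [M HM].
  exists M. intros x Hx. apply Rc_rate_le. left. now apply HM.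
Qed.

(* [S] is eventually above the equilibrium [mu N / (r + mu + a ep)] of the bound
   [S' >= mu N - (r + mu + a ep) S] valid once [I <= ep]; this tends to [Sst] as [ep -> 0]. *)
Lemma S_eventually_gt e : 0 < e -> Rbar_locally p_infty (fun t => Sst - e < S t).
Proof.
  intros He.
  assert (Hq : 0 < (r + mu) ^ 2) by (apply pow_lt; lra).
  set (ep := e * (r + mu) ^ 2 / (2 * (mu * N * a))).
  assert (Hep : 0 < ep)
    by (unfold ep; apply Rdiv_lt_0_compat; [nra | repeat apply Rmult_lt_0_compat; lra]).
  destruct (div_add_gap (r + mu) (mu * N) a ep ltac:(lra) ltac:(nra) Ha ltac:(lra)) as [_ Hgap].
  replace (mu * N * a * ep / (r + mu) ^ 2) with (e / 2) in Hgap by (unfold ep; field; lra).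
  apply (filter_imp (fun t => mu * N / (r + mu + a * ep) - e / 2 < S t)); [intros t Ht; lra|].
  apply (eventually_gt_of_derive_ge S _ (r + mu + a * ep) _ (e / 2) ltac:(nra) ltac:(lra) dS cS).
  generalize (eventually_nonneg_and _ (I_eventually_lt ep Hep)).
  apply filter_imp. intros x [Hx HIx].
  apply S_rate_ge; lra.
Qed.

Lemma seir_attractive :
  is_lim S p_infty Sst /\ is_lim E p_infty 0 /\ is_lim I p_infty 0 /\
  is_lim Rc p_infty 0 /\ is_lim V p_infty (N - Sst).
Proof.
  assert (LS : is_lim S p_infty Sst).
  { apply is_lim_of_eventually_near. intros e He.
    exact (filter_and _ _ (S_eventually_gt e He) (S_eventually_lt e He)). }
  assert (LE : is_lim E p_infty 0)
    by (apply is_lim_zero_of_nonneg; [apply EI_nonneg | exact E_eventually_lt]).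
  assert (LI : is_lim I p_infty 0)
    by (apply is_lim_zero_of_nonneg; [apply EI_nonneg | exact I_eventually_lt]).
  assert (LR : is_lim Rc p_infty 0)
    by (apply is_lim_zero_of_nonneg; [exact Rc_nonneg | exact Rc_eventually_lt]).
  repeat split; try assumption.
  apply (is_lim_ext_loc (fun t => N - S t - E t - I t - Rc t)).
  - exists 0. intros t Ht. pose proof (total_population t ltac:(lra)). lra.
  - replace (N - Sst) with (N - Sst - 0 - 0 - 0) by ring.
    repeat apply is_lim_minus'; auto using is_lim_const.
Qed.

Lemma S_upper_forward d x : S 0 - Sst < d -> 0 < d -> 0 <= x -> S x - Sst < d.
Proof.
  intros HS0 Hd Hx.
  pose proof (comparison_le S _ (r + mu) Sst 0 x Hx (fun y Hy => dS y ltac:(lra))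
                (fun y Hy => S_rate_le y ltac:(lra)) (cS 0)).
  assert ((S 0 - Sst) * exp (- (r + mu) * (x - 0)) < d) by (apply mul_exp_neg_lt; lra).
  lra.
Qed.

Lemma L_upper_forward d x : (forall y, 0 <= y -> S y <= Sst + eta) ->
  L 0 < d -> 0 < d -> 0 <= x -> L x < d.
Proof.
  intros HS HL0 Hd Hx.
  pose proof (comparison_le L _ dl 0 0 x Hx (fun y Hy => is_derive_L y ltac:(lra))
                (fun y Hy => ltac:(rewrite Rminus_0_r; apply L_rate_le, HS; lra))
                (continuity_L 0)).
  assert ((L 0 - 0) * exp (- dl * (x - 0)) < d) by (apply mul_exp_neg_lt; lra).
  lra.
Qed.

Lemma Rc_upper_forward d ep t : (forall y, 0 <= y -> I y <= ep) -> 0 <= ep ->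
  Rc 0 < d -> 0 < d -> 0 <= t -> Rc t < d + gm * ep / mu.
Proof.
  intros HI Hep HR0 Hd Ht.
  pose proof (comparison_le Rc _ mu (gm * ep / mu) 0 t Ht (fun y Hy => dR y ltac:(lra))
                (fun y Hy => Rc_rate_le ep y (HI y ltac:(lra))) (cR 0)).
  assert (0 <= gm * ep / mu) by (apply Rdiv_le_0_compat; nra).
  assert ((Rc 0 - gm * ep / mu) * exp (- mu * (t - 0)) < d) by (apply mul_exp_neg_lt; lra).
  lra.
Qed.

Lemma S_lower_forward d ep t : (forall y, 0 <= y -> I y <= ep) -> 0 <= ep ->
  Sst - S 0 < d -> 0 < d -> 0 <= t -> Sst - d - mu * N * a * ep / (r + mu) ^ 2 < S t.
Proof.
  intros HI Hep HS0 Hd Ht.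
  destruct (div_add_gap (r + mu) (mu * N) a ep ltac:(lra) ltac:(nra) Ha Hep) as [G1 G2].
  set (Sep := mu * N / (r + mu + a * ep)) in *.
  pose proof (comparison_ge S _ (r + mu + a * ep) Sep 0 t Ht (fun y Hy => dS y ltac:(lra))
                (fun y Hy => S_rate_ge ep y ltac:(lra) Hep (HI y ltac:(lra))) (cS 0)).
  assert ((Sep - S 0) * exp (- (r + mu + a * ep) * (t - 0)) < d)
    by (apply mul_exp_neg_lt; nra).
  lra.
Qed.

Lemma deviation_bound d t : 0 < d <= eta ->
  Rabs (S 0 - Sst) < d -> E 0 < d -> I 0 < d -> Rc 0 < d -> 0 <= t ->
  Rabs (S t - Sst) + E t + I t + Rc t < gain * d.
Proof.
  intros Hd HS0 HE0 HI0 HR0 Ht.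
  apply Rabs_lt_between' in HS0.
  assert (HS : forall x, 0 <= x -> S x <= Sst + eta)
    by (intros x Hx; pose proof (S_upper_forward d x ltac:(lra) ltac:(lra) Hx); lra).
  assert (HL : forall x, 0 <= x -> L x < (1 + th) * d)
    by (intros x Hx; apply L_upper_forward; [exact HS | unfold L; nra | nra | exact Hx]).
  set (ep := (1 + th) / th * d).
  assert (Hep : 0 < ep) by (unfold ep; apply Rmult_lt_0_compat; [apply Rdiv_lt_0_compat|]; lra).
  assert (HI : forall x, 0 <= x -> I x <= ep).
  { intros x Hx. specialize (HL x Hx). destruct (in_Sigma_forward x Hx) as [_ [HE _]].
    unfold L in HL. unfold ep. apply (Rmult_le_reg_l th); [lra|].
    replace (th * ((1 + th) / th * d)) with ((1 + th) * d) by (field; lra). lra. }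
  pose proof (S_upper_forward d t ltac:(lra) ltac:(lra) Ht).
  pose proof (S_lower_forward d ep t HI ltac:(lra) ltac:(lra) ltac:(lra) Ht).
  pose proof (Rc_upper_forward d ep t HI ltac:(lra) HR0 ltac:(lra) Ht).
  destruct (in_Sigma_forward t Ht) as [_ [HE [HIt _]]].
  assert (HEt : E t < (1 + th) * d) by (pose proof (HL t Ht); unfold L in *; nra).
  assert (HItep : I t <= ep) by (apply HI, Ht).
  assert (0 <= mu * N * a * ep / (r + mu) ^ 2).
  { assert (0 < mu * N * a) by (repeat apply Rmult_lt_0_compat; lra).
    apply Rdiv_le_0_compat; [nra | apply pow_lt; lra]. }
  assert (Rabs (S t - Sst) < d + mu * N * a * ep / (r + mu) ^ 2)
    by (apply Rabs_lt_between; split; lra).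
  assert (gain * d = (3 + th) * d + ep + gm * ep / mu + mu * N * a * ep / (r + mu) ^ 2)
    by (unfold ep; field; lra).
  lra.
Qed.

End Solution.

Lemma seir_stable eps : 0 < eps -> exists delta, 0 < delta /\
  forall S E I Rc V, seir_solution mu N a r sg gm S E I Rc V ->
  in_Sigma N (S 0) (E 0) (I 0) (Rc 0) (V 0) ->
  dist5 (S 0) (E 0) (I 0) (Rc 0) (V 0) Sst 0 0 0 (N - Sst) < delta ->
  forall t, 0 <= t -> dist5 (S t) (E t) (I t) (Rc t) (V t) Sst 0 0 0 (N - Sst) < eps.
Proof.
  intros Heps.
  assert (Hgain : 0 < gain).
  { assert (0 <= gm / mu) by (apply Rdiv_le_0_compat; lra).
    assert (0 <= mu * N * a / (r + mu) ^ 2)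
      by (apply Rdiv_le_0_compat; [apply Rmult_le_pos; [apply Rmult_le_pos|]; lra
                                   | apply pow_lt; lra]).
    assert (0 < (1 + th) / th) by (apply Rdiv_lt_0_compat; lra).
    nra. }
  remember gain as g eqn:Hg.
  set (delta := Rmin eta (eps / (2 * g))).
  assert (Hdelta : 0 < delta /\ delta <= eta /\ 2 * g * delta <= eps).
  { split; [apply Rmin_glb_lt; [lra | apply Rdiv_lt_0_compat; lra]|].
    split; [apply Rmin_l|].
    pose proof (Rmin_r eta (eps / (2 * g))) as Hmin.
    apply (Rmult_le_compat_l (2 * g)) in Hmin; [|lra].
    replace (2 * g * (eps / (2 * g))) with eps in Hmin by (field; lra). exact Hmin. }
  exists delta. split; [lra|].
  intros S E I Rc V Hsol H0 Hdist t Ht.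
  destruct (Rabs_le_dist5 (S 0) (E 0) (I 0) (Rc 0) (V 0) Sst 0 0 0 (N - Sst))
    as (D1 & D2 & D3 & D4 & _).
  pose proof H0 as (HS0 & HE0 & HI0 & HR0 & _).
  rewrite !Rminus_0_r, !Rabs_right in D2, D3, D4 by lra.
  pose proof (deviation_bound S E I Rc V Hsol H0 delta t
                ltac:(lra) ltac:(lra) ltac:(lra) ltac:(lra) ltac:(lra) Ht) as Hdev.
  rewrite <- Hg in Hdev.
  pose proof (dist5_le_deviation S E I Rc V Hsol H0 t Ht).
  nra.
Qed.

End SEIR.

Theorem mainTheorem8
  (mu N beta sigma gamma rho Delta1 Delta2 pi1 pi2 : R)
  (Hmu : 0 < mu) (HN : 0 < N) (Hbeta : 0 < beta) (Hsigma : 0 < sigma)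
  (Hgamma : 0 < gamma) (Hrho0 : 0 < rho) (Hrho1 : rho < 1)
  (HD1 : 0 <= Delta1) (HD2 : 0 <= Delta2)
  (Hp : 0 <= vacc_p Delta1 Delta2 pi1 pi2)
  (HR0 : repro_number mu N beta sigma gamma rho (vacc_p Delta1 Delta2 pi1 pi2) < 1) :
  let p := vacc_p Delta1 Delta2 pi1 pi2 in
  let Sst := mu * N ^ 2 / (p + mu * N) in
  let Vst := p * N / (p + mu * N) in
  (* stability (Lyapunov) of P* relative to Sigma *)
  (forall eps, 0 < eps -> exists delta, 0 < delta /\
     forall S E I Rc V : R -> R,
       is_solution mu N beta sigma gamma rho p S E I Rc V ->
       in_Sigma N (S 0) (E 0) (I 0) (Rc 0) (V 0) ->
       dist5 (S 0) (E 0) (I 0) (Rc 0) (V 0) Sst 0 0 0 Vst < delta ->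
       forall t, 0 <= t ->
         dist5 (S t) (E t) (I t) (Rc t) (V t) Sst 0 0 0 Vst < eps) /\
  (* global attractivity in Sigma *)
  (forall S E I Rc V : R -> R,
     is_solution mu N beta sigma gamma rho p S E I Rc V ->
     in_Sigma N (S 0) (E 0) (I 0) (Rc 0) (V 0) ->
     is_lim S p_infty Sst /\ is_lim E p_infty 0 /\ is_lim I p_infty 0 /\
     is_lim Rc p_infty 0 /\ is_lim V p_infty Vst).
Proof.
  intros p Sst Vst. fold p in Hp, HR0.
  set (a := beta / N * (1 - rho)). set (r := p / N).
  assert (Ha : 0 < a) by (apply Rmult_lt_0_compat; [apply Rdiv_lt_0_compat|]; lra).
  assert (Hr : 0 <= r) by (apply Rdiv_le_0_compat; lra).
  assert (ESst : Sst = mu * N / (r + mu)) by (unfold Sst, r; field; nra).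
  assert (EVst : Vst = N - mu * N / (r + mu)) by (unfold Vst, r; field; nra).
  destruct (lyapunov_weights_exist a sigma (sigma + mu) (gamma + mu) (mu * N / (r + mu)))
    as (eta & th & dl & Heta & Hth & Hdl & Hdl_E & Hdl_I);
    [lra | lra | lra | apply Rdiv_le_0_compat; nra | now apply repro_number_lt1 |].
  assert (Hext0 : forall S E I Rc V, is_solution mu N beta sigma gamma rho p S E I Rc V ->
            in_Sigma N (S 0) (E 0) (I 0) (Rc 0) (V 0) ->
            seir_solution mu N a r sigma gamma (ext0 S) (ext0 E) (ext0 I) (ext0 Rc) (ext0 V) /\
            in_Sigma N (ext0 S 0) (ext0 E 0) (ext0 I 0) (ext0 Rc 0) (ext0 V 0)).
  { intros S E I Rc V Hsol H0. split; [now apply seir_solution_ext0|].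
    now rewrite !(ext0_eq _ 0) by lra. }
  rewrite ESst, EVst. split.
  - intros eps Heps.
    destruct (seir_stable mu N a r sigma gamma Hmu HN Ha Hr Hsigma Hgamma eta th dl
                Heta Hth Hdl Hdl_E Hdl_I eps Heps) as (delta & Hdelta & Hstab).
    exists delta. split; [exact Hdelta|].
    intros S E I Rc V Hsol H0 Hdist t Ht.
    destruct (Hext0 S E I Rc V Hsol H0) as [Hsol' H0'].
    specialize (Hstab _ _ _ _ _ Hsol' H0').
    rewrite !(ext0_eq _ 0) in Hstab by lra.
    specialize (Hstab Hdist t Ht). now rewrite !(ext0_eq _ t) in Hstab.
  - intros S E I Rc V Hsol H0.
    destruct (Hext0 S E I Rc V Hsol H0) as [Hsol' H0'].
    destruct (seir_attractive mu N a r sigma gamma Hmu HN Ha Hr Hsigma Hgamma eta th dl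
                Heta Hth Hdl Hdl_E Hdl_I _ _ _ _ _ Hsol' H0') as (LS & LE & LI & LR & LV).
    repeat split; now apply is_lim_of_ext0.
Qed.
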